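(* Let $\mathbb{X},\mathbb{X}'\subseteq\mathbb{P}^{k-1}$ be sets of $n\ge2$ $\mathbb{F}_q$-rational points each, let $L,L'\in P_1$ be linear forms with $L$ vanishing at no point of $\mathbb{X}$ and $L'$ vanishing at no point of $\mathbb{X}'$, and let $\Phi_{\mathbb{X}}$ (built with $L$) and $\Phi_{\mathbb{X}'}$ (built with $L'$) be Macaulay inverse polynomials. Let $A\in\mathrm{GL}_k(\mathbb{F}_q)$ satisfy $\lambda_A(L)=L'$. If $\Lambda_A(\mathbb{X})=\mathbb{X}'$, then $r_{\mathbb{X}}=r_{\mathbb{X}'}$ and there is $c\in\mathbb{F}_q\setminus\{0\}$ such that $\Phi_{\mathbb{X}'}(\lambda_A(g))=c\,\Phi_{\mathbb{X}}(g)$ for all $g\in P_{2r_{\mathbb{X}}-1}$.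
   Context: $P=\mathbb{F}_q[x_1,\dots,x_k]$ standard graded. For a set $\mathbb{X}=\{p_1,\dots,p_n\}$ of distinct $\mathbb{F}_q$-rational points of $\mathbb{P}^{k-1}$: $R=P/I_{\mathbb{X}}$, $r_{\mathbb{X}}=\min\{i:\dim R_i=n\}$; given $L$ vanishing at no point, $\ell$ its class, $v_j$ the representative of $p_j$ with $L(v_j)=1$, $f(p_j)=f(v_j)$; separators $f_1,\dots,f_n\in R_{r_{\mathbb{X}}}$ with $f_i(p_j)=\delta_{ij}$; canonical ideal $\mathfrak{J}_{R/\mathbb{F}_q[\ell]}=\{\sum_i\varphi(f_i)f_i:\varphi\in\mathrm{Hom}_{\mathbb{F}_q[\ell]}(R,\mathbb{F}_q[\ell])\}$; $\widehat{\mathfrak{J}}_{\mathbb{X}}\subseteq P$ its preimage, so that $D_{\mathbb{X}}=P/\widehat{\mathfrak{J}}_{\mathbb{X}}$ (the doubling) is Artinian Gorenstein with top degree $2r_{\mathbb{X}}-1$. The graded dual $\mathcal{D}=\bigoplus_j\mathrm{Hom}_{\mathbb{F}_q}(P_j,\mathbb{F}_q)$ is a $P$-module via contraction $(f\circ\psi)(g)=\psi(fg)$; the Macaulay inverse system of an ideal $J$ is $J^\perp=\{\psi:f\circ\psi=0\ \forall f\in J\}$. A Macaulay inverse polynomial $\Phi_{\mathbb{X}}$ is an element of $\mathrm{Hom}_{\mathbb{F}_q}(P_{2r_{\mathbb{X}}-1},\mathbb{F}_q)$ generating $(\widehat{\mathfrak{J}}_{\mathbb{X}})^\perp$ as a $P$-module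 (unique up to a nonzero scalar). For $A\in\mathrm{GL}_k(\mathbb{F}_q)$, $\Lambda_A(p)=Ap$ on $\mathbb{P}^{k-1}$ and $\lambda_A:P\to P$ is the graded automorphism $\lambda_A(f)(v)=f(A^{-1}v)$. *)

From HB Require Import structures.
From mathcomp Require Import all_boot all_order all_algebra all_field.
From mathcomp Require Import mpoly.

Set Implicit Arguments.
Unset Strict Implicit.
Unset Printing Implicit Defensive.

Import Order.TTheory GRing.Theory.
Local Open Scope ring_scope.

Section Defs.
Variables (F : finFieldType) (k : nat).

Local Notation P := {mpoly F[k]}.

Definition ev (f : P) (v : 'cV[F]_k) : F := f.@[fun i => v i ord0].

Definition proj_eq (u v : 'cV[F]_k) : Prop := exists c : F, c != 0 /\ u = c *: v.

(* X : 'I_n -> 'cV_k lists representatives of n distinct points of P^{k-1} *)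
Definition distinct_points n (X : 'I_n -> 'cV[F]_k) : Prop :=
  (forall j, X j != 0) /\ (forall i j, proj_eq (X i) (X j) -> i = j).

Definition hcomp (d : nat) (f : P) : P :=
  \sum_(m <- msupp f | mdeg m == d) f@_m *: 'X_[m].

Definition inIX n (X : 'I_n -> 'cV[F]_k) (f : P) : Prop :=
  forall d j, ev (hcomp d f) (X j) = 0.

(* dim_F R_i = dim of the image of P_i -> F^n (evaluation at the points),
   computed as the rank of the span of the evaluation rows of the monomials
   of degree i *)
Definition evrow n (X : 'I_n -> 'cV[F]_k) (m : 'X_{1..k}) : 'rV[F]_n :=
  \row_j ev 'X_[m] (X j).
Definition dimR n (X : 'I_n -> 'cV[F]_k) (i : nat) : nat :=
  \rank (\sum_(m : 'X_{1..k < i.+1} | mdeg m == i) <<evrow X m>>)%MS.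

Definition is_regidx n (X : 'I_n -> 'cV[F]_k) (r : nat) : Prop :=
  dimR X r = n /\ (forall i, dimR X i = n -> (r <= i)%N).

Definition nrep (L : P) (v : 'cV[F]_k) : 'cV[F]_k := (ev L v)^-1 *: v.

(* lifts Fs i in P_r of the separators f_i in R_r: f_i(p_j) = delta_ij *)
Definition separators n (X : 'I_n -> 'cV[F]_k) (L : P) (r : nat)
  (Fs : 'I_n -> P) : Prop :=
  forall i, Fs i \is r.-homog /\
    forall j, ev (Fs i) (nrep L (X j)) = if i == j then 1 else 0.

(* F[l]-linear maps R -> F[l], with F[l] identified with F[T] (T |-> l),
   written as maps on P that vanish on I_X *)
Definition is_Fl_hom n (X : 'I_n -> 'cV[F]_k) (L : P) (psi : P -> {poly F}) :
  Prop :=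
  [/\ forall (a : F) f g, psi (a *: f + g) = a *: psi f + psi g,
      forall f, psi (L * f) = 'X * psi f
    & forall f, inIX X f -> psi f = 0].

Definition lift_poly (L : P) (p : {poly F}) : P :=
  (map_poly (fun c : F => c%:MP) p).[L].

(* preimage in P of the canonical ideal J_{R/F[l]} *)
Definition inJhat n (X : 'I_n -> 'cV[F]_k) (L : P) (r : nat) (h : P) : Prop :=
  exists Fs : 'I_n -> P, separators X L r Fs /\
  exists psi, is_Fl_hom X L psi /\
    inIX X (h - \sum_(i < n) lift_poly L (psi (Fs i)) * Fs i).

Definition is_lin (th : P -> F) : Prop :=
  forall (a : F) f g, th (a *: f + g) = a * th f + th g.

(* Hom_F(P_d, F), as functionals on P vanishing on the other components *)
Definition in_Hom_deg (d : nat) (th : P -> F) : Prop :=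
  is_lin th /\ forall f, th f = th (hcomp d f).

(* the graded dual D = (+)_j Hom_F(P_j, F) *)
Definition in_D (th : P -> F) : Prop :=
  is_lin th /\ exists N, forall f, th f = \sum_(d < N) th (hcomp d f).

(* Phi is a Macaulay inverse polynomial of X (built with L, r = r_X):
   Phi in Hom(P_{2r-1},F) and (Jhat)^perp = P o Phi, where
   (f o th)(g) = th(f g) *)
Definition macaulay_inv n (X : 'I_n -> 'cV[F]_k) (L : P) (r : nat)
  (Phi : P -> F) : Prop :=
  in_Hom_deg (2 * r).-1 Phi /\
  forall th, in_D th ->
    ((forall h, inJhat X L r h -> forall g, th (h * g) = 0) <->
     exists f : P, forall g, th g = Phi (f * g)).

(* lambda_A(f)(v) = f(A^-1 v) *)
Definition lamA (A : 'M[F]_k) (f : P) : P :=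
  f \mPo [tuple \sum_(j < k) (invmx A) i j *: ('X_j : P) | i < k].

Definition proj_image n (A : 'M[F]_k) (X X' : 'I_n -> 'cV[F]_k) : Prop :=
  (forall j, exists j', proj_eq (A *m X j) (X' j')) /\
  (forall j', exists j, proj_eq (A *m X j) (X' j')).

End Defs.

(* The substitution [lamA A] is a graded automorphism of P, and evaluating
   [lamA A f] at [X'] is evaluating [f] at [X] up to a bijection of the points
   and nonzero rescalings.  Hence the Hilbert functions of X and X' agree, so
   [r = r'], and [lamA A] carries separators, F[l]-linear maps and therefore
   the canonical ideal [Jhat_X] into [Jhat_X'].  Thus [Phi' o lamA A] is a
   functional of degree [2r-1] killing [Jhat_X], i.e. of the form [f o Phi];
   in degree [2r-1] only the constant term [c] of [f] matters.  Finally
   [c != 0] because [Phi' != 0]: for [n >= 2] the elements of [Jhat_X'] have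
   no constant term, so evaluation at the origin lies in [P o Phi']. *)

From HB Require Import structures.
From mathcomp Require Import all_boot all_order all_algebra all_field.
From mathcomp Require Import mpoly.

Set Implicit Arguments.
Unset Strict Implicit.
Unset Printing Implicit Defensive.

Import Order.TTheory GRing.Theory.
Local Open Scope ring_scope.

Section LinearSubstitution.
Variables (F : finFieldType) (k : nat).
Local Notation P := {mpoly F[k]}.
Implicit Types (M : 'M[F]_k) (f g : P) (v : 'cV[F]_k).

Definition lin_subst M : P -> P :=
  comp_mpoly [tuple \sum_(j < k) M i j *: ('X_j : P) | i < k].

HB.instance Definition _ M := GRing.LRMorphism.on (lin_subst M).

Lemma lin_substX M i : lin_subst M 'X_i = \sum_(j < k) M i j *: 'X_j.
Proof. by rewrite /lin_subst comp_mpolyXU -tnth_nth tnth_map tnth_ord_tuple. Qed.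

Lemma ev_lin_subst M f v : ev (lin_subst M f) v = ev f (M *m v).
Proof.
rewrite /ev /lin_subst comp_mpoly_meval; apply: meval_eq => i.
rewrite tnth_map tnth_ord_tuple rmorph_sum mxE.
by apply: eq_bigr => j _; rewrite /= mevalZ mevalXU.
Qed.

Lemma lin_subst_comp M1 M2 f :
  lin_subst M2 (lin_subst M1 f) = lin_subst (M1 *m M2) f.
Proof.
rewrite (mpolyE f) (raddf_sum (lin_subst M1)) !(raddf_sum (lin_subst _)) /=.
apply: eq_bigr => m _.
rewrite !linearZ mpolyXE_id !rmorph_prod /=; congr (_ *: _); apply: eq_bigr => i _.
rewrite !rmorphXn /= !lin_substX raddf_sum /=; congr (_ ^+ _).
under eq_bigr do rewrite linearZ /= lin_substX scaler_sumr.
rewrite exchange_big; apply: eq_bigr => l _.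
by rewrite mxE scaler_suml; apply: eq_bigr => j _; rewrite scalerA.
Qed.

Lemma lin_subst1 f : lin_subst 1%:M f = f.
Proof.
rewrite /lin_subst -[RHS]comp_mpoly_id; congr (_ \mPo _); apply: eq_from_tnth => i.
rewrite !tnth_map !tnth_ord_tuple (bigD1 i) //= mxE eqxx scale1r big1 ?addr0 //.
by move=> j /negbTE ji; rewrite mxE eq_sym ji scale0r.
Qed.

Lemma lin_substK M : M \in unitmx -> cancel (lin_subst M) (lin_subst (invmx M)).
Proof. by move=> uM f; rewrite lin_subst_comp mulmxV // lin_subst1. Qed.

Lemma lin_subst_dhomog M d f : f \is d.-homog -> lin_subst M f \is d.-homog.
Proof.
have lin_substX_homog i : lin_subst M 'X_i \is 1.-homog.
  by rewrite lin_substX; apply: rpred_sum => j _; rewrite rpredZ // dhomogX /= mdeg1.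
move=> /dhomogP hf; rewrite (mpolyE f) raddf_sum /= big_seq.
apply: rpred_sum => m /hf <-; rewrite linearZ rpredZ // mpolyXE_id rmorph_prod /= mdegE.
elim: (index_enum _) => [|i s ih]; first by rewrite !big_nil dhomog1.
rewrite !big_cons rmorphXn; apply: dhomogM => //.
by have := dhomogMn (m i) (lin_substX_homog i); rewrite mul1n.
Qed.

Lemma lin_subst_lift_poly M L p :
  lin_subst M (lift_poly L p) = lift_poly (lin_subst M L) p.
Proof.
rewrite /lift_poly !horner_coef raddf_sum /=; apply: eq_bigr => i _.
by rewrite rmorphM rmorphXn coef_map /= [lin_subst _ _]comp_mpolyC.
Qed.

End LinearSubstitution.

Section HomogeneousComponents.
Variables (F : finFieldType) (k : nat).
Local Notation P := {mpoly F[k]}.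
Implicit Types (M : 'M[F]_k) (f g : P) (v : 'cV[F]_k).

Lemma evD f g v : ev (f + g) v = ev f v + ev g v.
Proof. exact: mevalD. Qed.

Lemma evM f g v : ev (f * g) v = ev f v * ev g v.
Proof. exact: mevalM. Qed.

Lemma hcompE d f : hcomp d f = pihomog mdeg d f.
Proof. by []. Qed.

Lemma hcomp_dhomog d e g : g \is e.-homog -> hcomp d g = if e == d then g else 0.
Proof.
by move=> hg; case: eqP => [<-|/eqP ne]; [exact: pihomog_dE | exact: pihomog_ne0 hg].
Qed.

Lemma hcomp_lin_subst M d f : hcomp d (lin_subst M f) = lin_subst M (hcomp d f).
Proof.
rewrite !hcompE (pihomog_partitionE (leqnn (mmeasure mdeg f))).
rewrite (raddf_sum (lin_subst M)) !(raddf_sum (pihomog mdeg d)) (raddf_sum (lin_subst M)) /=.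
apply: eq_bigr => e _; rewrite -!hcompE.
have he : hcomp e f \is e.-homog := pihomogP _ _ _.
rewrite (hcomp_dhomog _ he) (hcomp_dhomog _ (lin_subst_dhomog M he)).
by case: eqP; rewrite ?raddf0.
Qed.

Lemma hcomp_mull e f g : g \is e.-homog -> hcomp e (f * g) = hcomp 0 f * g.
Proof.
move=> hg; rewrite hcompE {1}(pihomog_partitionE (leqnSn (mmeasure mdeg f))).
rewrite mulr_suml (raddf_sum (pihomog mdeg e)) big_ord_recl /= -!hcompE.
rewrite (hcomp_dhomog _ (dhomogM (pihomogP _ _ _) hg)) add0n eqxx big1 ?addr0 // => d _.
rewrite -hcompE (hcomp_dhomog _ (dhomogM (pihomogP _ _ _) hg)) -{2}[e]add0n eqn_add2r.
by rewrite /bump add1n.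
Qed.

Lemma dhomog0_mpolyC g : g \is 0.-homog -> g = (g@_0)%:MP.
Proof.
move=> hg; apply/mpolyP => m; rewrite mcoeffC.
have [->|nz] := eqVneq m 0%MM; first by rewrite mulr1.
by rewrite mulr0 (dhomog_nemf_coeff hg) //= mdeg_eq0.
Qed.

Lemma ev_dhomogZ d g (c : F) v : g \is d.-homog -> ev g (c *: v) = c ^+ d * ev g v.
Proof.
move=> /dhomogP hg; rewrite /ev {1 2}(mpolyE g) !raddf_sum mulr_sumr /=.
rewrite big_seq [RHS]big_seq; apply: eq_bigr => m /hg <-.
rewrite !mevalZ !mevalX mulrCA /= mdegE -prodrXr -big_split /=; congr (_ * _).
by apply: eq_bigr => i _; rewrite mxE exprMn.
Qed.

Lemma ev0_dhomog d g : g \is d.-homog -> (0 < d)%N -> ev g 0 = 0.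
Proof.
move=> hg d_gt0; have := ev_dhomogZ 0 0 hg; rewrite scaler0 expr0n.
by case: d d_gt0 {hg} => // d _ ->; rewrite mul0r.
Qed.

Lemma ev_dhomog0 g v : g \is 0.-homog -> ev g v = ev g 0.
Proof. by move=> hg; rewrite -[in RHS](scale0r v) (ev_dhomogZ _ _ hg) expr0 mul1r. Qed.

Lemma ev0_hcomp0 f : ev f 0 = ev (hcomp 0 f) 0.
Proof.
rewrite {1}(pihomog_partitionE (leqnSn (mmeasure mdeg f))) /ev raddf_sum big_ord_recl /=.
by rewrite big1 ?addr0 // => d _; apply: (ev0_dhomog (pihomogP _ _ _)).
Qed.

End HomogeneousComponents.

Section RegularityIndex.
Variables (F : finFieldType) (k n : nat).
Local Notation P := {mpoly F[k]}.
Implicit Types (X Y : 'I_n -> 'cV[F]_k) (M : 'M[F]_k).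

Definition evspace X i :=
  (\sum_(m : 'X_{1..k < i.+1} | mdeg m == i) <<evrow X m>>)%MS.

Lemma evrow_dhomog_sub X i (g : P) : g \is i.-homog ->
  (\row_j ev g (X j) <= evspace X i)%MS.
Proof.
move=> /dhomogP hg.
have -> : \row_j ev g (X j) = \sum_(m <- msupp g) g@_m *: evrow X m.
  apply/rowP => j; rewrite !mxE /ev {1}(mpolyE g) raddf_sum summxE /=.
  by apply: eq_bigr => m _; rewrite mevalZ !mxE.
rewrite big_seq; apply: summx_sub => m hm; apply: scalemx_sub.
have lt_m : (mdeg m < i.+1)%N by rewrite hg.
apply: (sumsmx_sup (BMultinom lt_m)) => /=; first by rewrite hg.
by rewrite genmxE.
Qed.

(* The evaluation rows of X are those of Y, read through [lin_subst M],
   up to a reindexing and a rescaling of the columns. *)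
Lemma dimR_le X Y M i : (forall j, exists j' (c : F), X j = c *: (M *m Y j')) ->
  (dimR X i <= dimR Y i)%N.
Proof.
move=> XY; have XY2 j : exists p : 'I_n * F, X j = p.2 *: (M *m Y p.1).
  by have [j' [c e]] := XY j; exists (j', c).
have [tc Htc] := fin_all_exists XY2.
pose D : 'M[F]_n := \matrix_(j', j) (if j' == (tc j).1 then (tc j).2 ^+ i else 0).
apply: leq_trans (mxrankM_maxl _ D); apply: mxrankS.
apply/sumsmx_subP => m /eqP hm; rewrite genmxE.
have hX : lin_subst M 'X_[m] \is i.-homog by rewrite lin_subst_dhomog // dhomogX /= hm.
have -> : evrow X m = (\row_j' ev (lin_subst M 'X_[m]) (Y j')) *m D.
  apply/rowP => j; rewrite !mxE (bigD1 (tc j).1) //= !mxE eqxx big1 ?addr0.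
    by rewrite Htc scalemxAr -ev_lin_subst (ev_dhomogZ _ _ hX) mulrC.
  by move=> j' /negbTE ne; rewrite !mxE ne mulr0.
exact/submxMr/evrow_dhomog_sub.
Qed.

Lemma is_regidx_eq X Y r r' : (forall i, dimR X i = dimR Y i) ->
  is_regidx X r -> is_regidx Y r' -> r = r'.
Proof.
move=> dXY [dXr minX] [dYr minY]; apply/eqP; rewrite eqn_leq.
by rewrite minX ?dXY // minY -?dXY.
Qed.

End RegularityIndex.

Section PointMatch.
Variables (F : finFieldType) (k : nat).
Local Notation P := {mpoly F[k]}.
Implicit Types (M N : 'M[F]_k) (f h L : P) (v w : 'cV[F]_k).

Lemma nrepZ L (c : F) v : L \is 1.-homog -> c != 0 -> nrep L (c *: v) = nrep L v.
Proof.
move=> hL c_nz; rewrite /nrep (ev_dhomogZ _ _ hL) expr1 scalerA invfM.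
by rewrite mulrAC mulVf // mul1r.
Qed.

Lemma nrep_lin_subst M L w : M *m nrep (lin_subst M L) w = nrep L (M *m w).
Proof. by rewrite /nrep ev_lin_subst scalemxAr. Qed.

Lemma inIX_lin_subst n (X Y : 'I_n -> 'cV[F]_k) N f :
  (forall j', exists j (c : F), N *m Y j' = c *: X j) ->
  inIX X f -> inIX Y (lin_subst N f).
Proof.
move=> YX hf d j'; have [j [c e]] := YX j'.
by rewrite hcomp_lin_subst ev_lin_subst e (ev_dhomogZ _ _ (pihomogP _ _ _)) hf mulr0.
Qed.

Variables (n : nat) (X Y : 'I_n -> 'cV[F]_k) (M : 'M[F]_k) (tau : 'I_n -> 'I_n).
Hypotheses (M_unit : M \in unitmx) (tau_inj : injective tau)
  (XY : forall j, exists2 c : F, c != 0 & X j = c *: (M *m Y (tau j))).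

Local Notation tau' := (invF tau_inj).

Lemma match_inv j : exists2 c : F, c != 0 & invmx M *m X j = c *: Y (tau j).
Proof.
by have [c c_nz ->] := XY j; exists c; rewrite // -scalemxAr mulKmx.
Qed.

Lemma match_lin_subst j : exists2 c : F, c != 0 & M *m Y (tau j) = c *: X j.
Proof.
have [c c_nz ->] := XY j; exists c^-1; first by rewrite invr_eq0.
by rewrite scalerA mulVf ?scale1r.
Qed.

Lemma dimR_match i : dimR X i = dimR Y i.
Proof.
apply/eqP; rewrite eqn_leq; apply/andP; split.
  by apply: (dimR_le (M := M)) => j; have [c _ e] := XY j; exists (tau j), c.
apply: (dimR_le (M := invmx M)) => j'; have [c c_nz e] := match_inv (tau' j').
exists (tau' j'), c^-1; rewrite e f_invF scalerA mulVf ?scale1r //.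
Qed.

Lemma inIX_match f : inIX X f -> inIX Y (lin_subst M f).
Proof.
apply: inIX_lin_subst => j'; have [c _ e] := match_lin_subst (tau' j').
by exists (tau' j'), c; rewrite -e f_invF.
Qed.

Lemma inIX_match_inv f : inIX Y f -> inIX X (lin_subst (invmx M) f).
Proof.
by apply: inIX_lin_subst => j; have [c _ e] := match_inv j; exists (tau j), c.
Qed.

Lemma separators_match L r Fs : L \is 1.-homog -> separators X L r Fs ->
  separators Y (lin_subst M L) r (fun i => lin_subst M (Fs (tau' i))).
Proof.
move=> hL sepF i; have [Fs_homog Fs_delta] := sepF (tau' i).
split=> [|j']; first exact: lin_subst_dhomog.
have [c c_nz e] := match_lin_subst (tau' j').
rewrite ev_lin_subst nrep_lin_subst -{1}(f_invF tau_inj j') e nrepZ //.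
by rewrite Fs_delta (inj_eq (can_inj (f_invF tau_inj))).
Qed.

Lemma is_Fl_hom_match L psi : is_Fl_hom X L psi ->
  is_Fl_hom Y (lin_subst M L) (fun f => psi (lin_subst (invmx M) f)).
Proof.
move=> [psiZD psiL psiI]; split=> [a f g|f|f /inIX_match_inv]; last exact: psiI.
  by rewrite raddfD /= linearZ /= psiZD.
by rewrite rmorphM /= lin_substK.
Qed.

Lemma inJhat_match L r h : L \is 1.-homog ->
  inJhat X L r h -> inJhat Y (lin_subst M L) r (lin_subst M h).
Proof.
move=> hL [Fs [sepF [psi [psi_hom hI]]]].
exists (fun i => lin_subst M (Fs (tau' i))); split; first exact: separators_match.
exists (fun f => psi (lin_subst (invmx M) f)); split; first exact: is_Fl_hom_match.
rewrite (reindex_inj tau_inj) /=.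
under eq_bigr do rewrite invF_f lin_substK //.
have -> : lin_subst M h
      - \sum_i lift_poly (lin_subst M L) (psi (Fs i)) * lin_subst M (Fs i)
    = lin_subst M (h - \sum_i lift_poly L (psi (Fs i)) * Fs i).
  rewrite raddfB (raddf_sum (lin_subst M)) /=; congr (_ - _); apply: eq_bigr => i _.
  by rewrite rmorphM /= lin_subst_lift_poly.
exact: inIX_match.
Qed.

End PointMatch.

Section MacaulayInverse.
Variables (F : finFieldType) (k : nat).
Local Notation P := {mpoly F[k]}.
Implicit Types (M : 'M[F]_k) (f g h L : P) (th : P -> F).

Lemma is_lin0 th : is_lin th -> th 0 = 0.
Proof.
move=> th_lin; have := th_lin 1 0 0; rewrite scaler0 addr0 mul1r.
by move=> /(congr1 (fun x => x - th 0)); rewrite subrr addrK.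
Qed.

Lemma is_linZ th c f : is_lin th -> th (c *: f) = c * th f.
Proof. by move=> th_lin; have := th_lin c f 0; rewrite !addr0 is_lin0 ?addr0. Qed.

Lemma in_Hom_deg_in_D d th : in_Hom_deg d th -> in_D th.
Proof.
move=> [th_lin th_d]; split=> //; exists d.+1 => f.
rewrite big_ord_recr /= big1 ?add0r -?th_d // => e _.
rewrite th_d (hcomp_dhomog _ (pihomogP _ _ _)) ltn_eqF ?ltn_ord //.
exact: is_lin0.
Qed.

Lemma in_Hom_deg_lin_subst M d th : in_Hom_deg d th ->
  in_Hom_deg d (fun g => th (lin_subst M g)).
Proof.
move=> [th_lin th_d]; split=> [a f g|f]; last by rewrite th_d hcomp_lin_subst.
by rewrite raddfD /= linearZ /= th_lin.
Qed.

Lemma ev0_in_D : in_D (fun g : P => ev g 0).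
Proof.
split=> [a f g|]; first by rewrite /ev mevalD mevalZ.
by exists 1%N => f; rewrite big_ord1 ev0_hcomp0.
Qed.

Variables (n : nat) (X : 'I_n -> 'cV[F]_k).

Lemma separators_deg_gt0 L r Fs : (2 <= n)%N -> separators X L r Fs -> (0 < r)%N.
Proof.
move=> n_ge2 sepF; rewrite lt0n; apply/eqP => r0.
pose j0 : 'I_n := Ordinal (ltnW n_ge2); pose j1 : 'I_n := Ordinal n_ge2.
have [homog0 delta] := sepF j0; rewrite r0 in homog0.
have := delta j1.
rewrite ev_dhomog0 // -(ev_dhomog0 (nrep L (X j0)) homog0) delta eqxx.
by move/eqP; rewrite oner_eq0.
Qed.

(* The separators have positive degree and the degree-0 part of a form in
   [I_X] vanishes at the points, so every element of [Jhat] has no constant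
   term. *)
Lemma inJhat_ev0 L r h : (2 <= n)%N -> inJhat X L r h -> ev h 0 = 0.
Proof.
move=> n_ge2 [Fs [sepF [psi [_ hI]]]].
have r_gt0 := separators_deg_gt0 n_ge2 sepF.
set S := \sum_i _ in hI; have -> : h = (h - S) + S by rewrite subrK.
rewrite evD ev0_hcomp0 -(ev_dhomog0 (X (Ordinal (ltnW n_ge2))) (pihomogP _ _ _)).
rewrite hI add0r.
rewrite /S /ev raddf_sum big1 //= => i _.
by rewrite -/(ev _ _) evM (ev0_dhomog (proj1 (sepF i)) r_gt0) mulr0.
Qed.

Variables (L : P) (r : nat) (Phi : P -> F).
Hypothesis Phi_inv : macaulay_inv X L r Phi.

Lemma macaulay_inv_perp h g : inJhat X L r h -> Phi (h * g) = 0.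
Proof.
move=> hJ; have [Phi_hom Phi_perp] := Phi_inv.
apply: (proj2 (Phi_perp Phi (in_Hom_deg_in_D Phi_hom))) hJ g.
by exists 1 => f; rewrite mul1r.
Qed.

(* A functional of degree [2r-1] killing [Jhat] is [f o Phi]; only the
   constant term of [f] survives in the top degree. *)
Lemma macaulay_inv_dhomog th : in_Hom_deg (2 * r).-1 th ->
  (forall h, inJhat X L r h -> forall g, th (h * g) = 0) ->
  exists c : F, forall g, g \is (2 * r).-1.-homog -> th g = c * Phi g.
Proof.
move=> th_hom th_perp; have [[Phi_lin Phi_d] Phi_perp] := Phi_inv.
have [f thE] := proj1 (Phi_perp th (in_Hom_deg_in_D th_hom)) th_perp.
have f0E : hcomp 0 f = ((hcomp 0 f)@_0)%:MP := dhomog0_mpolyC (pihomogP _ _ _).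
exists (hcomp 0 f)@_0 => g hg.
by rewrite thE Phi_d hcomp_mull // {1}f0E mul_mpolyC (is_linZ _ _ Phi_lin).
Qed.

Lemma macaulay_inv_neq0 : (2 <= n)%N ->
  exists2 g, g \is (2 * r).-1.-homog & Phi g != 0.
Proof.
move=> n_ge2; have [[_ Phi_d] Phi_perp] := Phi_inv.
have [|f evE] := proj1 (Phi_perp _ ev0_in_D).
  by move=> h hJ g; rewrite evM (inJhat_ev0 n_ge2 hJ) mul0r.
exists (hcomp (2 * r).-1 f); first exact: pihomogP.
by rewrite -Phi_d -[f]mulr1 -evE /ev meval1 oner_neq0.
Qed.

End MacaulayInverse.

Lemma proj_image_match (F : finFieldType) (k n : nat) (A : 'M[F]_k)
    (X X' : 'I_n -> 'cV[F]_k) :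
  A \in unitmx -> distinct_points X -> proj_image A X X' ->
  exists tau : 'I_n -> 'I_n, injective tau /\
    forall j, exists2 c : F, c != 0 & X j = c *: (invmx A *m X' (tau j)).
Proof.
move=> uA [_ X_inj] [AX_X' _].
have AX_X'2 j : exists p : 'I_n * F, p.2 != 0 /\ A *m X j = p.2 *: X' p.1.
  by have [j' [c e]] := AX_X' j; exists (j', c).
have [tc Htc] := fin_all_exists AX_X'2.
have XE j : X j = (tc j).2 *: (invmx A *m X' (tc j).1).
  by rewrite scalemxAr -(proj2 (Htc j)) mulKmx.
exists (fun j => (tc j).1); split=> [j1 j2 /= e|j]; last first.
  by exists (tc j).2; [exact: (proj1 (Htc j)) | exact: XE].
apply: X_inj; exists ((tc j1).2 / (tc j2).2); split.
  by rewrite mulf_eq0 negb_or (proj1 (Htc j1)) invr_eq0 (proj1 (Htc j2)).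
by rewrite (XE j1) (XE j2) e scalerA mulfVK ?(proj1 (Htc j2)).
Qed.

Theorem theorem7p7 (F : finFieldType) (k n : nat) (X X' : 'I_n -> 'cV[F]_k)
  (L L' : {mpoly F[k]}) (A : 'M[F]_k) (r r' : nat) (Phi Phi' : {mpoly F[k]} -> F) :
  (2 <= n)%N ->
  distinct_points X -> distinct_points X' ->
  L \is 1.-homog -> L' \is 1.-homog ->
  (forall j, ev L (X j) != 0) -> (forall j, ev L' (X' j) != 0) ->
  is_regidx X r -> is_regidx X' r' ->
  macaulay_inv X L r Phi -> macaulay_inv X' L' r' Phi' ->
  A \in unitmx -> lamA A L = L' ->
  proj_image A X X' ->
  r = r' /\
  exists c : F, c != 0 /\
    forall g : {mpoly F[k]}, g \is (2 * r).-1.-homog -> Phi' (lamA A g) = c * Phi g.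
Proof.
move=> n_ge2 dX _ hL _ _ _ regX regX' Phi_inv Phi'_inv uA LL' XX'.
have uM : invmx A \in unitmx by rewrite unitmx_inv.
have [tau [tau_inj match_X]] := proj_image_match uA dX XX'.
have r_eq : r = r' := is_regidx_eq (dimR_match uM tau_inj match_X) regX regX'.
subst r' L'; split=> //.
have [c Phi'E] : exists c : F, forall g, g \is (2 * r).-1.-homog ->
    Phi' (lin_subst (invmx A) g) = c * Phi g.
  apply: (macaulay_inv_dhomog Phi_inv (in_Hom_deg_lin_subst _ (proj1 Phi'_inv))).
  move=> h hJ g; rewrite rmorphM /=.
  exact: (macaulay_inv_perp Phi'_inv _ (inJhat_match uM tau_inj match_X hL hJ)).
exists c; split=> //.
have [g' hg' Phi'g'] := macaulay_inv_neq0 Phi'_inv n_ge2.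
apply: contraNneq Phi'g' => c0.
by rewrite -(lin_substK uA g') Phi'E ?c0 ?mul0r // lin_subst_dhomog.
Qed.
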